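(* Every two-player continuous time single controller additive reward (SC-AR) stochastic game possesses a stationary deterministic Blackwell-Nash equilibrium; that is, there exist stationary deterministic strategies $f^*,g^*$ and $\alpha_0>0$ such that $(f^*,g^* )$ is an $\alpha$-discounted Nash equilibrium for every $\alpha\in(0,\alpha_0]$.
   Context: A two-player continuous time stochastic game consists of a finite state set $S$, finite nonempty action sets $A^1(s),A^2(s)$, reward rates $r^i(s,a^1,a^2)$ ($i=1,2$), and transition rates $\mu(s',s,a^1,a^2)\ge0$ from $s$ to $s'\ne s$, with $\mu(s,s,a^1,a^2)=-\sum_{s'\ne s}\mu(s',s,a^1,a^2)$. Stationary strategies $f,g$ assign to each state a probability distribution on $A^1(s)$, resp. $A^2(s)$; they are deterministic if each such distribution is concentrated on one action. For a stationary pair, $r^i(s,f,g)=\sum_{a^1,a^2}f(s,a^1)g(s,a^2)r^i(s,a^1,a^2)$ and $Q(f,g)$ is the generator matrix with $Q(f,g)_{ss'}=\sum_{a^1,a^2}f(s,a^1)g(s,a^2)\mu(s',s,a^1,a^2)$. For $\alpha>0$ the $\alpha$-discounted payoff is $v^i_\alpha(f,g)=(\alpha I-Q(f,g))^{-1}r^i(f,g)$ (equivalently $E^s_{f,g}\int_0^\infty e^{-\alpha t}r^i(s_t,f,g)dt$). A stationary pair $(f^*,g^* )$ is an $\alpha$-discounted Nash equilibrium if for all $s$, $v^1_\alpha(s,f^*,g^* )\ge v^1_\alpha(s,f,g^* )$ for all stationary $f$ and $v^2_\alpha(s,f^*,g^* )\ge v^2_\alpha(s,f^*,g)$ for all stationary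 $g$. The game is SC-AR if (a) $\mu(s',s,a^1,a^2)=\mu(s',s,a^2)$ does not depend on $a^1$, and (b) $r^1(s,a^1,a^2)=r^1_1(s,a^1)+r^1_2(s,a^2)$ for some functions $r^1_1,r^1_2$, for all $s,a^1,a^2$. *)

From HB Require Import structures.
From mathcomp Require Import all_boot all_order all_algebra.
Set Implicit Arguments. Unset Strict Implicit. Unset Printing Implicit Defensive.
Import Order.TTheory GRing.Theory Num.Theory.
Local Open Scope ring_scope.

Section Game.
Variables (R : rcfType) (n : nat) (A1 A2 : finType).

Definition stationary (A : finType) (Av : 'I_n -> {set A})
    (f : 'I_n -> A -> R) : Prop :=
  forall s, (forall a, 0 <= f s a) /\ (forall a, a \notin Av s -> f s a = 0)
            /\ \sum_(a in Av s) f s a = 1.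

Definition deterministic (A : finType) (Av : 'I_n -> {set A})
    (f : 'I_n -> A -> R) : Prop :=
  forall s, exists2 a, a \in Av s & forall b, f s b = (b == a)%:R.

(* mu s' s a1 a2 : transition rate from s to s' (only used for s' != s);
   the diagonal entry is minus the total off-diagonal rate. *)
Definition gen_rate (mu : 'I_n -> 'I_n -> A1 -> A2 -> R)
    (s' s : 'I_n) (a1 : A1) (a2 : A2) : R :=
  if s' == s then - \sum_(t | t != s) mu t s a1 a2 else mu s' s a1 a2.

Definition rew (r : 'I_n -> A1 -> A2 -> R)
    (f : 'I_n -> A1 -> R) (g : 'I_n -> A2 -> R) : 'cV[R]_n :=
  \col_s \sum_a1 \sum_a2 f s a1 * g s a2 * r s a1 a2.

Definition genQ (mu : 'I_n -> 'I_n -> A1 -> A2 -> R)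
    (f : 'I_n -> A1 -> R) (g : 'I_n -> A2 -> R) : 'M[R]_n :=
  \matrix_(s, s') \sum_a1 \sum_a2 f s a1 * g s a2 * gen_rate mu s' s a1 a2.

Definition disc_payoff (mu : 'I_n -> 'I_n -> A1 -> A2 -> R)
    (r : 'I_n -> A1 -> A2 -> R) (alpha : R)
    (f : 'I_n -> A1 -> R) (g : 'I_n -> A2 -> R) : 'cV[R]_n :=
  invmx (alpha%:M - genQ mu f g) *m rew r f g.

Definition disc_nash (Av1 : 'I_n -> {set A1}) (Av2 : 'I_n -> {set A2})
    (mu : 'I_n -> 'I_n -> A1 -> A2 -> R)
    (r1 r2 : 'I_n -> A1 -> A2 -> R) (alpha : R)
    (fs : 'I_n -> A1 -> R) (gs : 'I_n -> A2 -> R) : Prop :=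
  (forall f, stationary Av1 f -> forall s,
      disc_payoff mu r1 alpha f gs s 0 <= disc_payoff mu r1 alpha fs gs s 0) /\
  (forall g, stationary Av2 g -> forall s,
      disc_payoff mu r2 alpha fs g s 0 <= disc_payoff mu r2 alpha fs gs s 0).

End Game.

From HB Require Import structures.
From mathcomp Require Import all_boot all_order all_algebra.
From mathcomp Require Import ring lra.
Set Implicit Arguments. Unset Strict Implicit. Unset Printing Implicit Defensive.
Import Order.TTheory GRing.Theory Num.Theory.
Local Open Scope ring_scope.

(* Since the transition rates ignore player 1's action, player 1's payoff against
   any [g] is the resolvent of player 2's chain applied to [r11(f) + r12(g)].
   Resolvents [(al - Q)^-1] of generators are monotone (minimum principle), so
   the pure strategy [f0] maximising [r11] is a best reply to everything, for
   every discount rate.  Against [f0], player 2 faces a continuous-time Markov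
   decision problem.  By policy improvement, a pure policy maximising the sum of
   its values is optimal at a given rate.  Values of pure policies are rational
   functions of the rate (Cramer's rule), so any two of them compare with a
   constant sign on some [(0, e]]; shrinking [e] over the finitely many pairs,
   a policy optimal at [e] stays optimal on all of [(0, e]]. *)

Definition generator (R : numDomainType) n (Q : 'M[R]_n) : Prop :=
  (forall s t, s != t -> 0 <= Q s t) /\ (forall s, \sum_t Q s t = 0).

Lemma shift_mulmxE (R : pzRingType) n (Q : 'M[R]_n) (a : R) (x : 'cV_n) s :
  ((a%:M - Q) *m x) s 0 = a * x s 0 - \sum_t Q s t * x t 0.
Proof. by rewrite mulmxBl mul_scalar_mx !mxE. Qed.

Section Resolvent.
Variables (R : realFieldType) (n : nat) (Q : 'M[R]_n) (a : R).
Hypotheses (a_gt0 : 0 < a) (Q_gen : generator Q).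

Lemma shift_generator_mulmxE (x : 'cV_n) s :
  ((a%:M - Q) *m x) s 0 = a * x s 0 - \sum_t Q s t * (x t 0 - x s 0).
Proof.
rewrite shift_mulmxE; congr (_ - _).
under [RHS]eq_bigr do rewrite mulrBr.
by rewrite sumrB -mulr_suml Q_gen.2 mul0r subr0.
Qed.

(* At a minimum [m] of [x], [(Q *m x) m = \sum_j Q m j * (x j - x m) >= 0]. *)
Lemma min_principle (x : 'cV_n) :
  (forall s, 0 <= ((a%:M - Q) *m x) s 0) -> forall s, 0 <= x s 0.
Proof.
move=> Mx_ge0 s0; rewrite leNgt; apply/negP => xs0_lt0.
have [m _ m_min] := @arg_minP _ R _ s0 xpredT (fun i => x i 0) isT.
have := Mx_ge0 m; rewrite shift_generator_mulmxE.
have sum_ge0 : 0 <= \sum_j Q m j * (x j 0 - x m 0).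
  apply: sumr_ge0 => j _; have [<-|mj] := eqVneq m j; first by rewrite subrr mulr0.
  by rewrite mulr_ge0 ?Q_gen.1 // subr_ge0 m_min.
have : a * x m 0 < 0 by rewrite pmulr_rlt0 // (le_lt_trans (m_min s0 isT)).
lra.
Qed.

Lemma min_principle_strict (x : 'cV_n) s :
  (forall s, 0 <= ((a%:M - Q) *m x) s 0) ->
  0 < ((a%:M - Q) *m x) s 0 -> 0 < x s 0.
Proof.
move=> Mx_ge0; have x_ge0 := min_principle Mx_ge0.
apply: contraTT; rewrite -leNgt le_eqVlt ltNge x_ge0 orbF => /eqP xs0.
rewrite shift_generator_mulmxE xs0 mulr0 sub0r oppr_gt0 -leNgt.
apply: sumr_ge0 => j _; have [<-|sj] := eqVneq s j; first by rewrite xs0 subr0 mulr0.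
by rewrite subr0 mulr_ge0 ?Q_gen.1.
Qed.

Lemma generator_shift_unitmx : (a%:M - Q) \in unitmx.
Proof.
rewrite -unitmx_tr -row_free_unit; apply: inj_row_free => v Mv0.
have MvT0 : (a%:M - Q) *m v^T = 0.
  by rewrite -[_ *m _]trmxK trmx_mul trmxK Mv0 trmx0.
have vT_ge0 : forall j, 0 <= v^T j 0.
  by apply: min_principle => s; rewrite MvT0 mxE.
have vT_le0 : forall j, 0 <= (- v^T) j 0.
  by apply: min_principle => s; rewrite mulmxN MvT0 !mxE oppr0.
apply/matrixP => i j; rewrite ord1 mxE.
have := vT_ge0 j; have := vT_le0 j; rewrite !mxE; lra.
Qed.

Lemma resolvent_ler (y z : 'cV_n) :
  (forall s, y s 0 <= z s 0) ->
  forall s, (invmx (a%:M - Q) *m y) s 0 <= (invmx (a%:M - Q) *m z) s 0.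
Proof.
move=> yz s; have := @min_principle (invmx (a%:M - Q) *m (z - y)).
rewrite mulmxA mulmxV ?generator_shift_unitmx // mul1mx mulmxBr => /(_ _ s).
by rewrite !mxE subr_ge0; apply=> t; rewrite !mxE subr_ge0.
Qed.

End Resolvent.

Section SignNearZero.
Variable R : realFieldType.
Implicit Types (p : {poly R}) (e x : R).

Lemma horner_norm_le_sum_coef p x :
  0 <= x -> x <= 1 -> `|p.[x]| <= \sum_(i < size p) `|p`_i|.
Proof.
move=> x_ge0 x_le1; rewrite horner_coef (le_trans (ler_norm_sum _ _ _)) //.
apply: ler_sum => i _; rewrite normrM normrX ler_piMr ?exprn_ile1 //.
by rewrite ger0_norm.
Qed.

(* Near [0+], [p * X + c] has the sign of [c] if [c != 0], and that of [p] otherwise. *)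
Lemma poly_sign_near0 p : exists2 e, 0 < e &
  {in `]0, e], forall x, 0 <= p.[x]} \/ {in `]0, e], forall x, p.[x] < 0}.
Proof.
elim/poly_ind: p => [|p c [e e_gt0 IH]].
  by exists 1 => //; left => x _; rewrite horner0.
have [->|c_neq0] := eqVneq c 0.
  exists e => //; case: IH => IH; [left|right] => x x_in; have := IH x x_in;
    move: x_in; rewrite in_itv /= hornerMXaddC addr0 => /andP[x_gt0 _].
    by move=> px_ge0; rewrite mulr_ge0 // ltW.
  by move=> px_lt0; rewrite pmulr_llt0.
pose B := \sum_(i < size p) `|p`_i|.
have B_ge0 : 0 <= B by apply: sumr_ge0.
have c_gt0 : 0 < `|c| by rewrite normr_gt0.
pose e' := `|c| / (B + `|c| + 1).
have e'_gt0 : 0 < e' by rewrite divr_gt0 //; lra.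
have e'_le1 : e' <= 1 by rewrite ler_pdivrMr ?mul1r; lra.
have Be'_lt : B * e' < `|c|.
  by rewrite mulrA ltr_pdivrMr; [rewrite !mulrDr mulr1 mulrC; nra | lra].
have tail_small : {in `]0, e'], forall x, `|p.[x] * x| < `|c|}.
  move=> x; rewrite in_itv /= => /andP[x_gt0 x_le]; rewrite normrM (gtr0_norm x_gt0).
  apply: le_lt_trans Be'_lt; apply: ler_pM => //; first exact: ltW.
  by apply: horner_norm_le_sum_coef; [exact: ltW | exact: le_trans x_le e'_le1].
exists e' => //; have [c_gt0'|c_lt0|c0] := ltrgt0P c; last by rewrite c0 eqxx in c_neq0.
  left => x /tail_small; rewrite hornerMXaddC (gtr0_norm c_gt0') ltr_norml.
  lra.
right => x /tail_small; rewrite hornerMXaddC (ltr0_norm c_lt0) ltr_norml.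
lra.
Qed.

Lemma ratfun_cmp_near0 (P1 D1 P2 D2 : {poly R}) (f1 f2 : R -> R) :
  (forall x, 0 < x -> D1.[x] != 0 /\ f1 x = P1.[x] / D1.[x]) ->
  (forall x, 0 < x -> D2.[x] != 0 /\ f2 x = P2.[x] / D2.[x]) ->
  exists2 e, 0 < e &
    {in `]0, e], forall x, f2 x <= f1 x} \/ {in `]0, e], forall x, f1 x < f2 x}.
Proof.
move=> f1E f2E.
have [e e_gt0 sgn] := poly_sign_near0 ((P1 * D2 - P2 * D1) * (D1 * D2)).
have diffE x : 0 < x -> f1 x - f2 x =
    ((P1 * D2 - P2 * D1) * (D1 * D2)).[x] / (D1.[x] * D2.[x]) ^+ 2
    /\ 0 < (D1.[x] * D2.[x]) ^+ 2.
  move=> x_gt0; have [D1x_neq0 ->] := f1E x x_gt0; have [D2x_neq0 ->] := f2E x x_gt0.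
  split; last by rewrite exprn_even_gt0 //= mulf_neq0.
  by rewrite !(hornerM, hornerD, hornerN); field; rewrite D1x_neq0 D2x_neq0.
exists e => //; case: sgn => sgn; [left|right] => x x_in; have := sgn x x_in;
  move: x_in; rewrite in_itv /= => /andP[x_gt0 _]; have [diff_x den_gt0] := diffE x x_gt0.
  by move=> num_ge0; rewrite -subr_ge0 diff_x divr_ge0 // ltW.
by move=> num_lt0; rewrite -subr_lt0 diff_x pmulr_llt0 ?invr_gt0.
Qed.

Lemma uniform_dichotomy_near0 (T : finType) (P1 P2 : T -> R -> Prop) :
  (forall t, exists2 e, 0 < e &
     {in `]0, e], forall x, P1 t x} \/ {in `]0, e], forall x, P2 t x}) ->
  exists2 e, 0 < e &
    forall t, {in `]0, e], forall x, P1 t x} \/ {in `]0, e], forall x, P2 t x}.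
Proof.
move=> near0.
suff [e e_gt0 near_e] : exists2 e, 0 < e & forall t, t \in enum T ->
    {in `]0, e], forall x, P1 t x} \/ {in `]0, e], forall x, P2 t x}.
  by exists e => // t; apply: near_e; rewrite mem_enum.
elim: (enum T) => [|t0 s [e2 e2_gt0 near_e2]]; first by exists 1.
have [e1 e1_gt0 near_e1] := near0 t0.
have shrink e e' t : e' <= e ->
    {in `]0, e], forall x, P1 t x} \/ {in `]0, e], forall x, P2 t x} ->
    {in `]0, e'], forall x, P1 t x} \/ {in `]0, e'], forall x, P2 t x}.
  move=> le_e'e [] Ht; [left|right] => x; rewrite in_itv /= => /andP[x_gt0 x_le];
  by apply: Ht; rewrite in_itv /= x_gt0 (le_trans x_le).
exists (Num.min e1 e2); first by rewrite lt_min e1_gt0 e2_gt0.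
move=> t; rewrite inE => /orP[/eqP ->|t_in].
  by apply: (shrink e1); [rewrite ge_min lexx | exact: near_e1].
by apply: (shrink e2); [rewrite ge_min lexx orbT | exact: near_e2].
Qed.

End SignNearZero.

Lemma resolvent_rational (R : fieldType) n (Q : 'M[R]_n) (r : 'cV[R]_n) s (a : R) :
  (a%:M - Q) \in unitmx ->
  (char_poly Q).[a] != 0 /\
  (invmx (a%:M - Q) *m r) s 0 =
    ((\adj (char_poly_mx Q) *m map_mx polyC r) s 0).[a] / (char_poly Q).[a].
Proof.
move=> M_unit.
have evalM : map_mx (horner_eval a) (char_poly_mx Q) = a%:M - Q.
  apply/matrixP => i j.
  by rewrite !mxE horner_evalE hornerD hornerN hornerMn hornerX hornerC.
have detE : (char_poly Q).[a] = \det (a%:M - Q).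
  by rewrite -evalM det_map_mx /= horner_evalE.
have detM_neq0 : \det (a%:M - Q) != 0 by rewrite -unitfE -unitmxE.
have numE : ((\adj (char_poly_mx Q) *m map_mx polyC r) s 0).[a] =
            (\adj (a%:M - Q) *m r) s 0.
  rewrite -evalM -map_mx_adj !mxE horner_sum; apply: eq_bigr => j _.
  by rewrite !mxE hornerM hornerC.
have adjE : \adj (a%:M - Q) = \det (a%:M - Q) *: invmx (a%:M - Q).
  by rewrite -[LHS]mulmx1 -(mulmxV M_unit) mulmxA mul_adj_mx mul_scalar_mx.
rewrite detE numE adjE -scalemxAl [in RHS]mxE; split => //.
by rewrite mulrAC mulfV // mul1r.
Qed.

Definition pure (R : nzSemiRingType) n (A : eqType) (d : 'I_n -> A) : 'I_n -> A -> R :=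
  fun s a => (a == d s)%:R.
Arguments pure {R n A} d s a.

Lemma sum_pure (R : nzSemiRingType) n (A : finType) (d : 'I_n -> A) s (F : A -> R) :
  \sum_a pure d s a * F a = F (d s).
Proof.
rewrite (bigD1 (d s)) //= /pure eqxx mul1r big1 ?addr0 // => a /negbTE ->.
by rewrite mul0r.
Qed.

Section Stationary.
Variables (R : rcfType) (n : nat) (A : finType) (Av : 'I_n -> {set A}).

Lemma pure_stationary (d : 'I_n -> A) :
  (forall s, d s \in Av s) -> stationary Av (pure d : 'I_n -> A -> R).
Proof.
move=> d_av s; split; first by move=> a; rewrite ler0n.
split; first by move=> a; apply: contraNeq; rewrite pnatr_eq0 eqb0 negbK => /eqP ->.
by rewrite (bigD1 (d s)) //= /pure eqxx big1 ?addr0 // => a /andP[_ /negbTE ->].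
Qed.

Lemma pure_deterministic (d : 'I_n -> A) :
  (forall s, d s \in Av s) -> deterministic Av (pure d : 'I_n -> A -> R).
Proof. by move=> d_av s; exists (d s). Qed.

Variable g : 'I_n -> A -> R.
Hypothesis g_stat : stationary Av g.

Lemma stationary_sum_const s (K : R) : \sum_a g s a * K = K.
Proof.
have [_ [g_out g_sum1]] := g_stat s.
by rewrite -mulr_suml (bigID (mem (Av s))) /= g_sum1 big1 ?addr0 ?mul1r.
Qed.

Lemma stationary_sum_ge0 s (F : A -> R) :
  (forall a, a \in Av s -> 0 <= F a) -> 0 <= \sum_a g s a * F a.
Proof.
have [g_ge0 [g_out _]] := g_stat s; move=> F_ge0; apply: sumr_ge0 => a _.
have [a_av|a_out] := boolP (a \in Av s); last by rewrite g_out ?mul0r.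
by rewrite mulr_ge0 ?F_ge0.
Qed.

Lemma stationary_sum_ler s (F G : A -> R) :
  (forall a, a \in Av s -> F a <= G a) -> \sum_a g s a * F a <= \sum_a g s a * G a.
Proof.
move=> FG; rewrite -subr_ge0 -sumrB.
under eq_bigr do rewrite -mulrBr.
by apply: stationary_sum_ge0 => a a_av; rewrite subr_ge0 FG.
Qed.

Lemma stationary_sum_eq s (F G : A -> R) :
  (forall a, a \in Av s -> F a = G a) -> \sum_a g s a * F a = \sum_a g s a * G a.
Proof.
by move=> FG; apply/eqP; rewrite eq_le !stationary_sum_ler // => a /FG ->.
Qed.

End Stationary.

Lemma stationary_sum2_add (R : rcfType) n (A1 A2 : finType)
    (Av1 : 'I_n -> {set A1}) (Av2 : 'I_n -> {set A2}) f g s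
    (F : A1 -> A2 -> R) (F1 : A1 -> R) (F2 : A2 -> R) :
  stationary Av1 f -> stationary Av2 g ->
  (forall a1 a2, a1 \in Av1 s -> a2 \in Av2 s -> F a1 a2 = F1 a1 + F2 a2) ->
  \sum_a1 \sum_a2 f s a1 * g s a2 * F a1 a2 =
    \sum_a1 f s a1 * F1 a1 + \sum_a2 g s a2 * F2 a2.
Proof.
move=> f_stat g_stat FE.
under eq_bigr do under eq_bigr do rewrite -mulrA; under eq_bigr do rewrite -mulr_sumr.
rewrite [LHS](stationary_sum_eq f_stat (G := fun a1 => F1 a1 + \sum_a2 g s a2 * F2 a2)).
  by under eq_bigr do rewrite mulrDr; rewrite big_split /= (stationary_sum_const f_stat).
move=> a1 a1_av; rewrite [LHS](stationary_sum_eq g_stat (G := fun a2 => F1 a1 + F2 a2)).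
  by under eq_bigr do rewrite mulrDr; rewrite big_split /= (stationary_sum_const g_stat).
by move=> a2 a2_av; rewrite FE.
Qed.

Section ControlledChain.
Variables (R : rcfType) (n : nat) (A : finType) (Av : 'I_n -> {set A}).
Variables (q : 'I_n -> A -> 'I_n -> R) (c : 'I_n -> A -> R).
Hypothesis q_ge0 : forall s a t, a \in Av s -> s != t -> 0 <= q s a t.
Hypothesis q_sum0 : forall s a, a \in Av s -> \sum_t q s a t = 0.

Definition chain_gen (g : 'I_n -> A -> R) : 'M[R]_n :=
  \matrix_(s, t) \sum_a g s a * q s a t.
Definition chain_rew (g : 'I_n -> A -> R) : 'cV[R]_n := \col_s \sum_a g s a * c s a.
Definition chain_value (al : R) (g : 'I_n -> A -> R) : 'cV[R]_n :=
  invmx (al%:M - chain_gen g) *m chain_rew g.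

Definition excessive (al : R) (v : 'cV[R]_n) : Prop :=
  forall s a, a \in Av s -> c s a + \sum_t q s a t * v t 0 <= al * v s 0.

Lemma chain_gen_sumE g (x : 'cV[R]_n) s :
  \sum_t chain_gen g s t * x t 0 = \sum_a g s a * \sum_t q s a t * x t 0.
Proof.
under eq_bigr do rewrite mxE mulr_suml; rewrite exchange_big /=.
by apply: eq_bigr => a _; rewrite mulr_sumr; apply: eq_bigr => t _; rewrite mulrA.
Qed.

Lemma chain_gen_generator g : stationary Av g -> generator (chain_gen g).
Proof.
move=> g_stat; split=> [s t st|s].
  by rewrite mxE; apply: (stationary_sum_ge0 g_stat) => a a_av; exact: q_ge0.
under eq_bigr do rewrite mxE; rewrite exchange_big /=.
under eq_bigr do rewrite -mulr_sumr.
rewrite (stationary_sum_eq g_stat (G := fun=> 0)); last exact: q_sum0.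
exact: stationary_sum_const.
Qed.

Lemma chain_value_le_excessive al v g :
  0 < al -> excessive al v -> stationary Av g -> forall s, chain_value al g s 0 <= v s 0.
Proof.
move=> al_gt0 v_exc g_stat s.
have gen_g := chain_gen_generator g_stat.
have M_unit := generator_shift_unitmx al_gt0 gen_g.
rewrite -[v](mulKmx M_unit); apply: resolvent_ler => // t.
rewrite shift_mulmxE chain_gen_sumE mxE -(stationary_sum_const g_stat t (al * v t 0)).
rewrite -subr_ge0 -!sumrB; under eq_bigr do rewrite -!mulrBr.
by apply: (stationary_sum_ge0 g_stat) => a a_av; have := v_exc t a a_av; lra.
Qed.

Definition policy := {ffun 'I_n -> A}.
Definition admissible (d : policy) := [forall s, d s \in Av s].
Definition switch (d : policy) s0 a0 : policy := [ffun s => if s == s0 then a0 else d s].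

Lemma admissibleP d : admissible d -> forall s, d s \in Av s.
Proof. by move=> /forallP. Qed.

Lemma switch_admissible d s0 a0 : admissible d -> a0 \in Av s0 -> admissible (switch d s0 a0).
Proof.
by move=> /forallP d_av a0_av; apply/forallP => s; rewrite ffunE; case: eqP => [->|].
Qed.

Lemma admissible_stationary d : admissible d -> stationary Av (pure d : 'I_n -> A -> R).
Proof. by move=> /admissibleP; exact: pure_stationary. Qed.

Lemma chain_gen_pure (d : 'I_n -> A) s t : chain_gen (pure d) s t = q s (d s) t.
Proof. by rewrite mxE sum_pure. Qed.

Lemma chain_rew_pure (d : 'I_n -> A) s : chain_rew (pure d) s 0 = c s (d s).
Proof. by rewrite mxE sum_pure. Qed.

(* [(al - Q_d') (value d' - value d)] vanishes off [s0] and is positive at [s0]. *)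
Lemma policy_improvement al d s0 a0 :
  0 < al -> admissible d -> a0 \in Av s0 ->
  al * chain_value al (pure d) s0 0 <
    c s0 a0 + \sum_t q s0 a0 t * chain_value al (pure d) t 0 ->
  (forall s, chain_value al (pure d) s 0 <= chain_value al (pure (switch d s0 a0)) s 0) /\
  chain_value al (pure d) s0 0 < chain_value al (pure (switch d s0 a0)) s0 0.
Proof.
move=> al_gt0 d_adm a0_av violated.
set d' := switch d s0 a0; set v := chain_value al (pure d).
have d'_adm : admissible d' by apply: switch_admissible.
have gen_d := chain_gen_generator (admissible_stationary d_adm).
have gen_d' := chain_gen_generator (admissible_stationary d'_adm).
set w := chain_value al (pure d') - v.
have fixed_v s : c s (d s) + \sum_t q s (d s) t * v t 0 - al * v s 0 = 0.
  have /matrixP/(_ s 0) := mulKVmx (generator_shift_unitmx al_gt0 gen_d) (chain_rew (pure d)).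
  rewrite -/(chain_value al (pure d)) -/v shift_mulmxE chain_rew_pure.
  under eq_bigr do rewrite chain_gen_pure.
  lra.
have wE s : ((al%:M - chain_gen (pure d')) *m w) s 0 =
    c s (d' s) + \sum_t q s (d' s) t * v t 0 - al * v s 0.
  rewrite /w mulmxBr /chain_value mulmxA mulmxV ?generator_shift_unitmx // mul1mx.
  rewrite [LHS]mxE chain_rew_pure [X in _ + X]mxE shift_mulmxE.
  under eq_bigr do rewrite chain_gen_pure.
  lra.
have w_ge0 s : 0 <= ((al%:M - chain_gen (pure d')) *m w) s 0.
  rewrite wE /d' ffunE; case: eqP => [->|_]; last by rewrite fixed_v.
  lra.
split=> [s|].
  by have := min_principle al_gt0 gen_d' w_ge0 s; rewrite !mxE subr_ge0.
have w_s0_gt0 : 0 < w s0 0.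
  by apply: (min_principle_strict al_gt0 gen_d' w_ge0); rewrite wE /d' ffunE eqxx; lra.
by move: w_s0_gt0; rewrite !mxE subr_gt0.
Qed.

Hypothesis Av_nonempty : forall s, exists a, a \in Av s.

Lemma optimal_policy_exists al :
  0 < al -> exists2 d, admissible d & excessive al (chain_value al (pure d)).
Proof.
move=> al_gt0.
pose d0 : policy := [ffun s => xchoose (Av_nonempty s)].
have d0_adm : admissible d0 by apply/forallP => s; rewrite ffunE; exact: xchooseP.
pose total (d : policy) := \sum_s chain_value al (pure d) s 0.
have [d d_adm d_max] := @arg_maxP _ R _ d0 admissible total d0_adm.
exists d => // s0 a0 a0_av; rewrite leNgt; apply/negP => violated.
have [le_switch lt_switch] := policy_improvement al_gt0 d_adm a0_av violated.
have := d_max _ (switch_admissible d_adm a0_av); apply/negP; rewrite -ltNge.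
rewrite /total (bigD1 s0) // [X in _ < X](bigD1 s0) //=.
by apply: ltr_leD => //; apply: ler_sum => s _; exact: le_switch.
Qed.

Lemma chain_value_cmp_near0 g1 g2 s :
  stationary Av g1 -> stationary Av g2 ->
  exists2 e, 0 < e &
    {in `]0, e], forall al, chain_value al g2 s 0 <= chain_value al g1 s 0} \/
    {in `]0, e], forall al, chain_value al g1 s 0 < chain_value al g2 s 0}.
Proof.
move=> g1_stat g2_stat.
have gen_g1 := chain_gen_generator g1_stat; have gen_g2 := chain_gen_generator g2_stat.
apply: ratfun_cmp_near0 => al al_gt0; apply: resolvent_rational.
  exact: generator_shift_unitmx gen_g1.
exact: generator_shift_unitmx gen_g2.
Qed.

Lemma blackwell_policy :
  exists2 d, admissible d &
    exists2 e, 0 < e & {in `]0, e], forall al, excessive al (chain_value al (pure d))}.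
Proof.
pose T := ({d : policy | admissible d} * {d : policy | admissible d} * 'I_n)%type.
pose V (d : {d : policy | admissible d}) al := chain_value al (pure (val d)).
have [e e_gt0 frozen] := @uniform_dichotomy_near0 R T
  (fun t al => V t.1.2 al t.2 0 <= V t.1.1 al t.2 0)
  (fun t al => V t.1.1 al t.2 0 < V t.1.2 al t.2 0)
  (fun t => chain_value_cmp_near0 t.2 (admissible_stationary (valP t.1.1))
                                     (admissible_stationary (valP t.1.2))).
have [d d_adm d_opt] := optimal_policy_exists e_gt0.
exists d => //; exists e => // al al_in s0 a0 a0_av.
have /andP[al_gt0 _] := al_in.
rewrite leNgt; apply/negP => violated.
have [_ lt_switch] := policy_improvement al_gt0 d_adm a0_av violated.
have d'_adm := switch_admissible d_adm a0_av.
have e_in : e \in `]0, e] by rewrite in_itv /= e_gt0 lexx.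
have := frozen (exist admissible d d_adm, exist admissible _ d'_adm, s0).
case=> /= cmp; first by have := cmp al al_in; rewrite /V /= leNgt lt_switch.
have := cmp e e_in; rewrite /V /= ltNge => /negP; apply.
exact: chain_value_le_excessive e_gt0 d_opt (admissible_stationary d'_adm) s0.
Qed.

End ControlledChain.

Section SingleController.
Variables (R : rcfType) (n : nat) (A1 A2 : finType).
Variables (Av1 : 'I_n -> {set A1}) (Av2 : 'I_n -> {set A2}).
Variable mu : 'I_n -> 'I_n -> A1 -> A2 -> R.
Hypothesis mu_ge0 : forall s' s a1 a2, s' != s -> a1 \in Av1 s -> a2 \in Av2 s ->
  0 <= mu s' s a1 a2.
Hypothesis mu_SC : forall s' s a1 b1 a2, a1 \in Av1 s -> b1 \in Av1 s -> a2 \in Av2 s ->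
  mu s' s a1 a2 = mu s' s b1 a2.
Variable f0 : 'I_n -> A1.
Hypothesis f0_av : forall s, f0 s \in Av1 s.

Definition sc_rate s a t : R := gen_rate mu t s (f0 s) a.

Lemma sc_rate_ge0 s a t : a \in Av2 s -> s != t -> 0 <= sc_rate s a t.
Proof. by move=> a_av st; rewrite /sc_rate /gen_rate eq_sym (negbTE st) mu_ge0 // eq_sym. Qed.

Lemma sc_rate_sum0 s a : a \in Av2 s -> \sum_t sc_rate s a t = 0.
Proof.
move=> _; rewrite (bigD1 s) //= {1}/sc_rate /gen_rate eqxx.
rewrite (eq_bigr (fun t => mu t s (f0 s) a)) ?addNr // => t /negbTE ts.
by rewrite /sc_rate /gen_rate ts.
Qed.

Lemma genQ_sc f g :
  stationary Av1 f -> stationary Av2 g -> genQ mu f g = chain_gen sc_rate g.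
Proof.
move=> f_stat g_stat; apply/matrixP => s t; rewrite !mxE.
rewrite (stationary_sum2_add f_stat g_stat (F1 := fun=> 0) (F2 := sc_rate s ^~ t)).
  by rewrite (stationary_sum_const f_stat) add0r.
move=> a1 a2 a1_av a2_av; rewrite add0r /sc_rate /gen_rate; case: eqP => _.
  by congr (- _); apply: eq_bigr => u _; apply: mu_SC.
exact: mu_SC.
Qed.

Lemma sc_ar_best_reply (r1 : 'I_n -> A1 -> A2 -> R) r11 r12 al f g :
  (forall s a1 a2, a1 \in Av1 s -> a2 \in Av2 s -> r1 s a1 a2 = r11 s a1 + r12 s a2) ->
  (forall s a1, a1 \in Av1 s -> r11 s a1 <= r11 s (f0 s)) ->
  0 < al -> stationary Av1 f -> stationary Av2 g ->
  forall s, disc_payoff mu r1 al f g s 0 <= disc_payoff mu r1 al (pure f0) g s 0.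
Proof.
move=> r1E f0_max al_gt0 f_stat g_stat.
have f0_stat : stationary Av1 (pure f0 : 'I_n -> A1 -> R) by exact: pure_stationary.
rewrite /disc_payoff !genQ_sc //; apply: resolvent_ler => // [|s].
  exact: (chain_gen_generator (Av := Av2) sc_rate_ge0 sc_rate_sum0 g_stat).
rewrite !mxE (stationary_sum2_add f_stat g_stat (r1E s)).
rewrite (stationary_sum2_add f0_stat g_stat (r1E s)) sum_pure lerD2r.
rewrite -[leRHS](stationary_sum_const f_stat s).
exact: stationary_sum_ler f_stat s _ _ (f0_max s).
Qed.

Lemma disc_payoff_pure_sc (r : 'I_n -> A1 -> A2 -> R) al g :
  stationary Av2 g ->
  disc_payoff mu r al (pure f0) g = chain_value sc_rate (fun s a => r s (f0 s) a) al g.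
Proof.
move=> g_stat; rewrite /disc_payoff genQ_sc //; last exact: pure_stationary.
congr (_ *m _).
apply/matrixP => s j; rewrite !mxE.
under eq_bigr do under eq_bigr do rewrite -mulrA.
by under eq_bigr do rewrite -mulr_sumr; rewrite sum_pure.
Qed.

End SingleController.

Theorem theorem4 (R : rcfType) (n : nat) (A1 A2 : finType)
    (Av1 : 'I_n -> {set A1}) (Av2 : 'I_n -> {set A2})
    (mu : 'I_n -> 'I_n -> A1 -> A2 -> R) (r1 r2 : 'I_n -> A1 -> A2 -> R)
    (hAv1 : forall s, exists a, a \in Av1 s)
    (hAv2 : forall s, exists a, a \in Av2 s)
    (hmu : forall s' s a1 a2, s' != s -> a1 \in Av1 s -> a2 \in Av2 s ->
             0 <= mu s' s a1 a2)
    (hSC : forall s' s a1 b1 a2, a1 \in Av1 s -> b1 \in Av1 s -> a2 \in Av2 s ->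
             mu s' s a1 a2 = mu s' s b1 a2)
    (hAR : exists (r11 : 'I_n -> A1 -> R) (r12 : 'I_n -> A2 -> R),
             forall s a1 a2, a1 \in Av1 s -> a2 \in Av2 s ->
               r1 s a1 a2 = r11 s a1 + r12 s a2) :
  exists fs gs,
    [/\ stationary Av1 fs, deterministic Av1 fs,
        stationary Av2 gs, deterministic Av2 gs &
        exists2 alpha0 : R, 0 < alpha0 &
          forall alpha, 0 < alpha -> alpha <= alpha0 ->
            disc_nash Av1 Av2 mu r1 r2 alpha fs gs].
Proof.
have [r11 [r12 r1E]] := hAR.
pose f0 s := [arg max_(a > xchoose (hAv1 s) in Av1 s) r11 s a]%O.
have f0_av s : f0 s \in Av1 s by rewrite /f0; case: arg_maxP => //; exact: xchooseP.
have f0_max s a : a \in Av1 s -> r11 s a <= r11 s (f0 s).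
  by rewrite /f0; case: arg_maxP => [|b _ b_max /b_max //]; exact: xchooseP.
have [d d_adm [e e_gt0 d_opt]] := blackwell_policy (fun s a => r2 s (f0 s) a)
  (sc_rate_ge0 hmu f0_av) (sc_rate_sum0 mu f0) hAv2.
have d_av := admissibleP d_adm.
exists (pure f0), (pure d); split;
  [exact: pure_stationary | exact: pure_deterministic |
   exact: pure_stationary | exact: pure_deterministic |].
exists e => // al al_gt0 al_le; split=> [f f_stat|g g_stat] s.
  by apply: (sc_ar_best_reply hmu hSC f0_av r1E f0_max) => //; exact: pure_stationary.
rewrite !(disc_payoff_pure_sc hSC f0_av) //; last exact: pure_stationary.
apply: (chain_value_le_excessive (sc_rate_ge0 hmu f0_av) (sc_rate_sum0 mu f0) al_gt0 _ g_stat).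
by apply: d_opt; rewrite in_itv /= al_gt0 al_le.
Qed.
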